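(* Let $n,k$ be positive integers with $n\geq k$ and $n\geq 3(n-k)$, and let $i\in\{0,1,\dots,n-k\}$. Then for every $C\in\mathcal{K}_k(n)$, the diagram $\alpha_{n,k,i}(C)$ lies in $\mathcal{K}_{k+1}(n+1)$.
   Context: A linear chord diagram of size $n$ is a partition of $\{1,2,\dots,2n\}$ into blocks of size two, called chords. For a chord $c=\{s_c,e_c\}$ with $s_c<e_c$, $s_c$ is its start point, $e_c$ its end point, and its length is $e_c-s_c$. $\mathcal{K}_k(n)$ is the set of all linear chord diagrams of size $n$ in which every chord has length at least $k$. Let $M_{n,k}=\{k+1,\dots,2n-k\}$, and for a diagram $C$ of size $n$ let $S_C$ be the set of chords of $C$ with neither endpoint in $M_{n,k}$. The map $\alpha_{n,k,i}$ is defined on $C\in\mathcal{K}_k(n)$ as follows. Insert a new chord $c$ whose start point is placed immediately before $M_{n,k}$ (between positions $k$ and $k+1$) and whose end point is placed immediately after $M_{n,k}$ (between positions $2n-k$ and $2n-k+1$), keeping the relative order of all original points, and relabel the points $1,\dots,2n+2$; so $c=\{k+1,2n-k+2\}$. Then repeatedly swap the start point of $c$ with the nearest start point to its left belonging to a chord of $S_C$ (i.e., the two chords exchange these start positions), stopping when exactly $i$ start points of chords of $S_C$ lie to the left of the start point of $c$. The resulting diagram of size $n+1$ is $\alpha_{n,k,i}(C)$. (Under the hypotheses, $|S_C|\ge n-k$, so this is well defined.) *)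

From mathcomp Require Import all_boot.
Set Implicit Arguments. Unset Strict Implicit. Unset Printing Implicit Defensive.

(* A linear chord diagram of size n is represented as a double-occurrence
   word w : seq nat of length 2n: position p (1-based) of {1..2n} is the
   list index p-1, and the chord containing it is named by the label w_(p-1).
   Two positions form a chord iff they carry the same label; every label
   occurring in w occurs exactly twice.  (Labels are mere names: the
   partition of {1..2n} is the set of label classes.) *)
Definition is_diagram (n : nat) (w : seq nat) : Prop :=
  size w = 2 * n /\ forall x, x \in w -> count_mem x w = 2.

Definition min_len (k : nat) (w : seq nat) : Prop :=
  forall i j, i < j -> j < size w -> nth 0 w i = nth 0 w j -> k <= j - i.

Definition inK (k n : nat) (w : seq nat) : Prop := is_diagram n w /\ min_len k w.

Definition fresh (w : seq nat) : nat := (foldr maxn 0 w).+1.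

(* M_{n,k} = {k+1,...,2n-k} (1-based) = indices k <= j < 2n-k (0-based). *)
Definition inM (n k j : nat) : bool := (k <= j) && (j < 2 * n - k).

Definition inS (n k : nat) (w : seq nat) (a : nat) : bool :=
  (a \in w) && all (fun j => (nth 0 w j != a) || ~~ inM n k j) (iota 0 (size w)).

(* Insertion of the chord c: start point between positions k and k+1,
   end point between positions 2n-k and 2n-k+1; c = {k+1, 2n-k+2}. *)
Definition insert_c (n k : nat) (w : seq nat) : seq nat :=
  let c := fresh w in
  take k w ++ [:: c] ++ take (2 * n - 2 * k) (drop k w) ++ [:: c]
    ++ drop (2 * n - k) w.

Definition is_start (v : seq nat) (j : nat) : bool := index (nth 0 v j) v == j.

Definition swap_pos (v : seq nat) (a b : nat) : seq nat :=
  set_nth 0 (set_nth 0 v a (nth 0 v b)) b (nth 0 v a).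

Section Alpha.
Variables (n k i : nat) (w : seq nat).

Let c := fresh w.
Let SC (v : seq nat) (j : nat) : bool := is_start v j && inS n k w (nth 0 v j).

Definition SC_left (v : seq nat) : seq nat :=
  filter (SC v) (iota 0 (index c v)).

Definition alpha_step (v : seq nat) : seq nat :=
  if i < size (SC_left v) then swap_pos v (index c v) (last 0 (SC_left v))
  else v.

(* repeat (with ample fuel: each swap strictly decreases the count) *)
Definition alpha : seq nat :=
  let v0 := insert_c n k w in iter (size v0) alpha_step v0.
End Alpha.

From mathcomp Require Import all_boot zify.

(* Since 2(n-k) <= k, no chord of C lies inside one of the blocks [1,k], M_{n,k},
   [2n-k+1,2n], so inserting c lengthens every old chord by at least one; only c,
   of length 2(n-k)+1, may be too short.  Each swap hands c's start point to a chord
   of S_C, whose end lies in the last block: either the two start points are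
   adjacent, or the point just left of c's start begins a chord ending in M_{n,k},
   hence lies within the first 2(n-k) points; in both cases that chord keeps
   length > k.  Counting the chords between the three blocks shows that exactly n-k
   of the first k points begin chords ending in M_{n,k}, so when the swaps stop,
   with at most i <= n-k start points of S_C left of c, the chord c starts within
   the first 2(n-k) points and has length at least k+1. *)

Set Implicit Arguments.
Unset Strict Implicit.
Unset Printing Implicit Defensive.

Section SeqFacts.
Variables (T : eqType) (x0 : T).
Implicit Types (s : seq T) (x : T).

Lemma index_first s x j : j < size s -> nth x0 s j = x ->
  (forall t, t < j -> nth x0 s t != x) -> index x s = j.
Proof.
move=> js <- before; have := index_nth x0 js; rewrite leq_eqVlt => /orP[/eqP //|lt].
by have := before _ lt; rewrite nth_index ?eqxx ?mem_nth.
Qed.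

Lemma count_mem_nth s x :
  count_mem x s = count (fun j => nth x0 s j == x) (iota 0 (size s)).
Proof. by rewrite -[s in LHS](mkseq_nth x0) /mkseq count_map. Qed.

Lemma count_mem2_pos s x a b j : count_mem x s = 2 -> a != b ->
  a < size s -> b < size s -> j < size s ->
  nth x0 s a = x -> nth x0 s b = x -> nth x0 s j = x -> j = a \/ j = b.
Proof.
move=> two ab av bv jv sa sb sj; apply/pred2P/contraT; rewrite negb_or => /andP[ja jb].
suff : 3 <= count_mem x s by rewrite two.
rewrite count_mem_nth -size_filter -[3]/(size [:: a; b; j]).
apply: uniq_leq_size => [|t]; first by rewrite /= !inE negb_or ab !(eq_sym _ j) ja jb.
by rewrite !inE mem_filter mem_iota => /or3P[]/eqP->; rewrite ?sa ?sb ?sj eqxx.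
Qed.

Lemma count_mem2_other s x a : count_mem x s = 2 -> a < size s -> nth x0 s a = x ->
  exists b, [/\ b < size s, b != a & nth x0 s b = x].
Proof.
move=> two av sa; set other := fun b => (b != a) && (nth x0 s b == x).
have [/hasP[b]|/hasPn none] := boolP (has other (iota 0 (size s))).
  by rewrite mem_iota => bv /andP[ba /eqP sb]; exists b.
suff : count_mem x s <= 1 by rewrite two.
rewrite count_mem_nth -size_filter -[1]/(size [:: a]).
apply: uniq_leq_size; first exact/filter_uniq/iota_uniq.
move=> t; rewrite mem_filter inE => /andP[tx tv].
by apply/contraT => ta; have := none t tv; rewrite /other ta tx.
Qed.

Lemma count_mem_sym s1 s2 : uniq s1 -> uniq s2 ->
  count (mem s2) s1 = count (mem s1) s2.
Proof.
move=> u1 u2; rewrite -!size_filter; apply/perm_size/uniq_perm; rewrite ?filter_uniq //.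
by move=> x; rewrite !mem_filter andbC.
Qed.

Lemma count_mem_other_blocks s1 s2 s3 : uniq s1 -> uniq s2 -> uniq s3 ->
  {in s1, forall x, count_mem x (s1 ++ s2 ++ s3) = 2} ->
  count (mem s2) s1 + count (mem s3) s1 = size s1.
Proof.
move=> u1 u2 u3 two.
have one x : x \in s1 -> (x \in s2) + (x \in s3) = 1.
  by move=> x1; have := two x x1; rewrite !count_cat !count_uniq_mem // x1; lia.
have disj : count (predI (mem s2) (mem s3)) s1 = 0.
  rewrite -(count_pred0 s1); apply: eq_in_count => x /one /=.
  by case: (x \in s2); case: (x \in s3).
rewrite -count_predUI disj addn0 -count_predT; apply: eq_in_count => x /one /=.
by case: (x \in s2); case: (x \in s3).
Qed.

Lemma double_occurrence_blocks s1 s2 s3 : uniq s1 -> uniq s2 -> uniq s3 ->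
  {in s1 ++ s2 ++ s3, forall x, count_mem x (s1 ++ s2 ++ s3) = 2} ->
  (count (mem s2) s1).*2 + size s3 = size s1 + size s2.
Proof.
move=> u1 u2 u3 two.
have rot r1 r2 r3 : perm_eq (r1 ++ r2 ++ r3) (s1 ++ s2 ++ s3) ->
    {in r1, forall x, count_mem x (r1 ++ r2 ++ r3) = 2}.
  move=> perm x xr; rewrite (permP perm); apply: two.
  by rewrite -(perm_mem perm) mem_cat xr.
have rot1 : perm_eq (s2 ++ s3 ++ s1) (s1 ++ s2 ++ s3).
  by apply/permP => P; rewrite !count_cat; lia.
have rot2 : perm_eq (s3 ++ s1 ++ s2) (s1 ++ s2 ++ s3).
  by apply/permP => P; rewrite !count_cat; lia.
have := count_mem_other_blocks u1 u2 u3 (rot _ _ _ (perm_refl _)).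
have := count_mem_other_blocks u2 u3 u1 (rot _ _ _ rot1).
have := count_mem_other_blocks u3 u1 u2 (rot _ _ _ rot2).
rewrite (count_mem_sym u3 u1) (count_mem_sym u3 u2) (count_mem_sym u2 u1); lia.
Qed.

End SeqFacts.

Lemma fresh_notin w : fresh w \notin w.
Proof.
apply/negP => /(@leq_bigmax_seq _ w xpredT id) /(_ isT).
by rewrite /fresh foldrE ltnn.
Qed.

Lemma nth_neq_fresh w j : nth 0 w j != fresh w.
Proof.
have [jw|wj] := ltnP j (size w); last by rewrite nth_default.
by apply: contraNneq (fresh_notin w) => <-; rewrite mem_nth.
Qed.

Lemma nth_swap_pos v a b t : nth 0 (swap_pos v a b) t =
  if t == b then nth 0 v a else if t == a then nth 0 v b else nth 0 v t.
Proof. by rewrite /swap_pos nth_set_nth /= nth_set_nth. Qed.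

Lemma perm_swap_pos v a b : a < size v -> b < size v -> perm_eq (swap_pos v a b) v.
Proof.
move=> av bv; apply/permP => P.
have count_ge j : j < size v -> P (nth 0 v j) <= count P v.
  move=> jv; case Pj: (P (nth 0 v j)) => //.
  by rewrite -has_count; apply/(has_nthP 0); exists j.
have := count_ge _ av; have := count_ge _ bv.
rewrite /swap_pos !count_set_nth_ltn ?size_set_nth ?(leq_trans bv) ?leq_maxr //.
by rewrite nth_set_nth /=; case: eqP => [->|_]; lia.
Qed.

Lemma last_filter_iota (P : pred nat) j : P j -> last 0 (filter P (iota 0 j.+1)) = j.
Proof. by move=> Pj; rewrite -addn1 iotaD filter_cat /= Pj last_cat. Qed.

Lemma iter_invariant_stops (T : Type) (f : T -> T) (I : T -> Prop) (active : pred T)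
    (mu : T -> nat) :
  (forall v, I v -> active v -> I (f v) /\ mu (f v) < mu v) ->
  (forall v, ~~ active v -> f v = v) ->
  forall N v, I v -> mu v <= N -> I (iter N f v) /\ ~~ active (iter N f v).
Proof.
move=> step stop; elim=> [|N IH] v Iv le_mu; have [act|inact] := boolP (active v).
- by have [_] := step v Iv act; lia.
- by [].
- by have [If lt] := step v Iv act; rewrite iterSr; apply: IH => //; lia.
- suff -> : iter N.+1 f v = v by [].
  by elim: N.+1 => //= N' ->; apply: stop.
Qed.

Definition far_apart (K : nat) (v : seq nat) (x : nat) : Prop :=
  forall a b, a < b -> b < size v -> nth 0 v a = x -> nth 0 v b = x -> K <= b - a.

Lemma min_lenP K v : min_len K v <-> forall x, far_apart K v x.
Proof.
split=> [ml x a b ab bv <- /esym|far a b ab bv]; first exact: ml.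
by move=> vab; apply: (far (nth 0 v a) a b).
Qed.

Lemma far_apart_two K v x a b : count_mem x v = 2 -> a < b -> b < size v ->
  nth 0 v a = x -> nth 0 v b = x -> K <= b - a -> far_apart K v x.
Proof.
move=> two ab bv va vb Kab s t st tv vs vt.
have pos j := @count_mem2_pos _ 0 v x a b j two (negbT (ltn_eqF ab)) (ltn_trans ab bv) bv.
have := pos t tv va vb vt; have := pos s (ltn_trans st tv) va vb vs; lia.
Qed.

Lemma far_apart_eq K v v' x : far_apart K v x -> size v' = size v ->
  (forall t, (nth 0 v' t == x) = (nth 0 v t == x)) -> far_apart K v' x.
Proof.
move=> far size_eq same a b ab; rewrite size_eq => bv /eqP va /eqP vb.
by apply: far => //; apply/eqP; rewrite -same.
Qed.

Section Diagram.
Variables (n k : nat) (w : seq nat).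
Hypotheses (k_le_n : k <= n) (short_middle : 2 * (n - k) <= k) (w_in : inK k n w).

Let pre := take k w.
Let mid := take (2 * n - 2 * k) (drop k w).
Let suf := drop (2 * n - k) w.

Lemma size_w : size w = 2 * n. Proof. by case: w_in => [[]]. Qed.
Lemma count_w x : x \in w -> count_mem x w = 2.
Proof. by move=> xw; case: w_in => [[_ ->]]. Qed.
Lemma min_len_w : min_len k w. Proof. by case: w_in. Qed.

Lemma w_far a b : a < b -> b < 2 * n -> nth 0 w a = nth 0 w b -> k <= b - a.
Proof. by rewrite -size_w; apply: min_len_w. Qed.

Lemma w_blocks : w = pre ++ mid ++ suf.
Proof.
rewrite -{1}(cat_take_drop k w) -{1}(cat_take_drop (2 * n - 2 * k) (drop k w)).
by rewrite drop_drop; congr (_ ++ _ ++ drop _ _); lia.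
Qed.

Lemma size_pre : size pre = k. Proof. by rewrite size_takel // size_w; lia. Qed.
Lemma size_mid : size mid = 2 * n - 2 * k.
Proof. by rewrite size_takel // size_drop size_w; lia. Qed.
Lemma size_suf : size suf = k. Proof. by rewrite size_drop size_w; lia. Qed.

Lemma nth_mid t : nth 0 mid t = if t < 2 * n - 2 * k then nth 0 w (k + t) else 0.
Proof.
case: ltnP => tm; first by rewrite nth_take ?nth_drop.
by rewrite nth_default // size_mid.
Qed.

Lemma uniq_window lo len : lo + len <= 2 * n -> len <= k -> uniq (take len (drop lo w)).
Proof.
move=> lo_len len_k; apply/(uniqP 0) => a b.
rewrite !inE size_takel ?size_drop ?size_w; last by lia.
move=> a_len b_len; rewrite !nth_take // !nth_drop => eq_ab.
case: (ltngtP a b) => // ab.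
- suff : k <= lo + b - (lo + a) by lia.
  by apply: (w_far _ _ eq_ab); lia.
- suff : k <= lo + a - (lo + b) by lia.
  by apply: (w_far _ _ (esym eq_ab)); lia.
Qed.

Lemma uniq_pre : uniq pre.
Proof. by rewrite /pre -[w in take _ w]drop0; apply: uniq_window; lia. Qed.
Lemma uniq_mid : uniq mid. Proof. by apply: uniq_window; lia. Qed.
Lemma uniq_suf : uniq suf.
Proof.
rewrite /suf -(@take_oversize _ k (drop _ w)); last by rewrite size_drop size_w; lia.
by apply: uniq_window; lia.
Qed.

Lemma pre_nth_neq t j : t < j -> j < k -> nth 0 w t != nth 0 w j.
Proof.
move=> tj jk; apply/eqP => eq_tj.
suff : k <= j - t by lia.
by apply: (w_far tj _ eq_tj); lia.
Qed.

Lemma inS_notin_mid y : y \in w -> inS n k w y = (y \notin mid).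
Proof.
move=> yw; rewrite /inS yw; apply/allP/idP => [far_M|].
  apply/(nthP 0) => -[t]; rewrite size_mid nth_mid => tm; rewrite tm => wy.
  have := far_M (k + t); rewrite mem_iota size_w wy eqxx /inM /=; lia.
move=> y_mid j; rewrite mem_iota size_w /inM /= => jn.
apply/contraR: y_mid; rewrite negb_or !negbK => /andP[/eqP wj /andP[kj jM]].
apply/(nthP 0); exists (j - k); first by rewrite size_mid; lia.
by rewrite nth_mid ifT ?subnKC //; lia.
Qed.

Lemma count_nonS_pre : count (predC (inS n k w)) pre = n - k.
Proof.
have := double_occurrence_blocks uniq_pre uniq_mid uniq_suf.
rewrite -w_blocks size_pre size_mid size_suf -mul2n => /(_ count_w).
rewrite (@eq_in_count _ _ (mem mid)); first lia.
by move=> y y_pre; rewrite /= inS_notin_mid ?negbK // w_blocks mem_cat y_pre.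
Qed.

Lemma nonS_start_lt j : j < k -> ~~ inS n k w (nth 0 w j) -> j < 2 * (n - k).
Proof.
move=> jk; rewrite inS_notin_mid; last by rewrite mem_nth // size_w; lia.
rewrite negbK => /(nthP 0)[t]; rewrite size_mid nth_mid => tm; rewrite tm => wt.
suff : k <= k + t - j by lia.
by apply: (w_far _ _ (esym wt)); lia.
Qed.

Lemma inS_partner j : j < k -> inS n k w (nth 0 w j) ->
  exists e, [/\ 2 * n - k <= e, e < 2 * n, nth 0 w e = nth 0 w j & j + k <= e].
Proof.
move=> jk jS; have jw : j < size w by rewrite size_w; lia.
have [e [ew ej we]] := count_mem2_other (count_w (mem_nth 0 jw)) jw erefl.
rewrite size_w in ew.
have je : j < e.
  rewrite ltn_neqAle eq_sym ej leqNgt; apply/negP => ej'.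
  suff : k <= j - e by lia.
  by apply: (w_far ej' _ we); lia.
have far : k <= e - j by apply: (w_far je ew (esym we)).
move: jS => /andP[_ /allP/(_ e)]; rewrite mem_iota size_w ew -we eqxx /inM => /(_ isT).
by exists e; split=> //; lia.
Qed.

Let c := fresh w.
Let q := 2 * n - k + 1.
Let v0 := insert_c n k w.

Lemma v0_blocks : v0 = pre ++ c :: mid ++ c :: suf. Proof. by []. Qed.

Lemma perm_v0 : perm_eq v0 [:: c, c & w].
Proof.
rewrite v0_blocks [in X in perm_eq _ X]w_blocks.
by apply/permP => P; rewrite /= !count_cat /= count_cat /=; lia.
Qed.

Lemma size_v0 : size v0 = 2 * n + 2.
Proof. by rewrite (perm_size perm_v0) /= size_w; lia. Qed.

Lemma nth_v0_k : nth 0 v0 k = c.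
Proof. by rewrite v0_blocks nth_cat size_pre ltnn subnn. Qed.

Lemma nth_v0_q : nth 0 v0 q = c.
Proof.
rewrite v0_blocks nth_cat size_pre ltnNge (_ : k <= q) /=; last by lia.
have -> : q - k = (2 * n - 2 * k).+1 by lia.
by rewrite /= nth_cat size_mid ltnn subnn.
Qed.

Let orig_pos j := if j < k then j else if j < q then j.-1 else j - 2.

Lemma nth_v0 j : j != k -> j != q -> nth 0 v0 j = nth 0 w (orig_pos j).
Proof.
move=> /eqP jk /eqP jq; rewrite v0_blocks /orig_pos nth_cat size_pre.
case: ltnP => [j_pre|kj]; first by rewrite nth_take.
have -> : j - k = (j - k).-1.+1 by lia.
rewrite /= nth_cat size_mid nth_mid; case: ltnP => [j_mid|qj].
  by rewrite ifT; [congr nth | ]; lia.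
have -> : (j - k).-1 - (2 * n - 2 * k) = (j - q).-1.+1 by lia.
by rewrite /= nth_drop ifF; [congr nth | ]; lia.
Qed.

Lemma index_v0 : index c v0 = k.
Proof.
apply: index_first; [by rewrite size_v0; lia | exact: nth_v0_k |].
by move=> t tk; rewrite v0_blocks nth_cat size_pre tk nth_take ?nth_neq_fresh.
Qed.

Lemma far_v0 x : x != c -> far_apart k.+1 v0 x.
Proof.
move=> xc a b ab; rewrite size_v0 => b_lt va vb.
have c_pos j : nth 0 v0 j = x -> j != k /\ j != q.
  by move=> vj; split; apply: contraNneq xc => jc; rewrite -vj jc ?nth_v0_k ?nth_v0_q.
have [[ak aq] [bk bq]] := (c_pos a va, c_pos b vb).
have := w_far (a := orig_pos a) (b := orig_pos b).
rewrite -nth_v0 // -nth_v0 // va vb /orig_pos.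
move: ak aq bk bq => /eqP ? /eqP ? /eqP ? /eqP ?.
case: (ltnP a k) => ?; case: (ltnP a q) => ?; case: (ltnP b k) => ?; case: (ltnP b q) => ?;
  lia.
Qed.

Record swap_inv (v : seq nat) : Prop := {
  inv_perm : perm_eq v v0;
  inv_index : index c v <= k;
  inv_prefix : forall j, j < index c v -> nth 0 v j = nth 0 w j;
  inv_q : nth 0 v q = c;
  inv_suffix : forall j, q < j -> nth 0 v j = nth 0 v0 j;
  inv_far : forall x, x != c -> far_apart k.+1 v x }.
(* c's own length only becomes large enough once the swaps stop. *)

Lemma swap_inv_v0 : swap_inv v0.
Proof.
split=> //; rewrite ?index_v0 //; [ | exact: nth_v0_q | exact: far_v0].
by move=> j jk; rewrite v0_blocks nth_cat size_pre jk nth_take.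
Qed.

Section Invariant.
Variables (v : seq nat) (inv : swap_inv v).

Lemma inv_size : size v = 2 * n + 2.
Proof. by rewrite (perm_size (inv_perm inv)) size_v0. Qed.

Lemma inv_count x : count_mem x v = count_mem x w + (c == x).*2.
Proof.
rewrite (permP (perm_trans (inv_perm inv) perm_v0)) /= -addnn; lia.
Qed.

Lemma inv_count_c : count_mem c v = 2.
Proof. by rewrite inv_count eqxx (count_memPn (fresh_notin w)). Qed.

Lemma inv_nth_index : nth 0 v (index c v) = c.
Proof. by rewrite nth_index // -has_pred1 has_count inv_count_c. Qed.

Lemma inv_index_lt : index c v < size v.
Proof. by rewrite index_mem -has_pred1 has_count inv_count_c. Qed.

Lemma inv_is_start j : j < index c v -> is_start v j.
Proof.
move=> jp; have pk := inv_index inv; have := inv_index_lt; rewrite inv_size => p_lt.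
rewrite /is_start (inv_prefix inv jp); apply/eqP/index_first; first by rewrite inv_size; lia.
  exact: inv_prefix.
by move=> t tj; rewrite (inv_prefix inv) ?pre_nth_neq //; lia.
Qed.

Lemma size_SC_left : size (SC_left n k w v) = count (inS n k w) (take (index c v) w).
Proof.
rewrite /SC_left size_filter -(map_nth_iota0 0); last by rewrite size_w; have := inv_index inv; lia.
rewrite count_map; apply: eq_in_count => j; rewrite mem_iota /= => jp.
by rewrite inv_is_start // (inv_prefix inv jp).
Qed.

Lemma SC_left_last : SC_left n k w v != [::] ->
  let p' := last 0 (SC_left n k w v) in
  [/\ p' < index c v, inS n k w (nth 0 w p') &
      p'.+1 = index c v \/ index c v <= 2 * (n - k)].
Proof.
set p := index c v; set L := SC_left n k w v => L_nil p'.
have mem_L j : (j \in L) = [&& is_start v j, inS n k w (nth 0 v j) & j < p].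
  by rewrite mem_filter mem_iota -andbA.
have : p' \in L by move: L_nil; rewrite /p'; case: (L) => // x L' _; exact: mem_last.
rewrite mem_L => /and3P[_ p'S p'p].
rewrite (inv_prefix inv p'p) in p'S; split=> //.
have [-> | ne] := eqVneq p p'.+1; [by left | right].
have p1k : p.-1 < k by have := inv_index inv; lia.
have [S_last|nS] := boolP (inS n k w (nth 0 w p.-1)); last by have := nonS_start_lt p1k nS; lia.
suff : p' = p.-1 by lia.
rewrite /p' /L /SC_left -/c -/p (_ : p = p.-1.+1); last by lia.
by rewrite last_filter_iota //= inv_is_start ?(inv_prefix inv) //=; lia.
Qed.
End Invariant.

Lemma swap_inv_step v p' : swap_inv v -> p' < index c v -> inS n k w (nth 0 w p') ->
    p'.+1 = index c v \/ index c v <= 2 * (n - k) ->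
  swap_inv (swap_pos v (index c v) p') /\ index c (swap_pos v (index c v) p') = p'.
Proof.
move=> inv p'p p'S near; set p := index c v in p'p near *.
set v' := swap_pos v p p'; set a := nth 0 w p' in p'S.
have pk : p <= k := inv_index inv.
have size_v : size v = 2 * n + 2 := inv_size inv.
have perm_v' : perm_eq v' v by apply: perm_swap_pos; rewrite size_v; lia.
have size_v' : size v' = 2 * n + 2 by rewrite (perm_size perm_v').
have nth_v' t : nth 0 v' t = if t == p' then c else if t == p then a else nth 0 v t.
  by rewrite nth_swap_pos inv_nth_index // (inv_prefix inv p'p).
have same t : t != p' -> t != p -> nth 0 v' t = nth 0 v t.
  by move=> /negbTE tp' /negbTE tp; rewrite nth_v' tp' tp.
have p'k : p' < k by lia.
have [e [e_suf e_lt we p'e]] := inS_partner p'k p'S.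
have ve : nth 0 v (e + 2) = a.
  rewrite (inv_suffix inv) ?nth_v0 /orig_pos; try lia.
  by rewrite ifF ?ifF ?addnK //; lia.
have index_v' : index c v' = p'.
  apply: (@index_first _ 0); [by rewrite size_v'; lia | by rewrite nth_v' eqxx |].
  by move=> t tp'; rewrite same ?(inv_prefix inv) ?nth_neq_fresh //; lia.
split=> //; split; rewrite ?index_v'.
- exact: perm_trans perm_v' (inv_perm inv).
- lia.
- by move=> j jp'; rewrite same ?(inv_prefix inv) //; lia.
- by rewrite same ?(inv_q inv) //; lia.
- by move=> j qj; rewrite same ?(inv_suffix inv) //; lia.
move=> x xc; have [-> | xa] := eqVneq x a.
  apply: (@far_apart_two _ _ _ p (e + 2)); rewrite ?size_v' ?nth_v' ?eqxx; try lia.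
  - have ca : (c == a) = false by rewrite eq_sym; apply/negbTE/nth_neq_fresh.
    rewrite (permP perm_v') inv_count // ca.
    by rewrite addn0 count_w // mem_nth // size_w; lia.
  - by rewrite ifF ?eqxx //; lia.
  - by rewrite ifF ?ifF //; lia.
apply: far_apart_eq (inv_far inv xc) _ _ => [|t]; first by rewrite size_v' size_v.
have cx : (c == x) = false by rewrite eq_sym (negbTE xc).
have ax : (a == x) = false by rewrite eq_sym (negbTE xa).
rewrite nth_v'; have [->|tp'] := eqVneq t p'; first by rewrite (inv_prefix inv p'p) cx ax.
by have [->|//] := eqVneq t p; rewrite inv_nth_index // cx ax.
Qed.

Lemma inv_stopped_inK v : swap_inv v -> size (SC_left n k w v) <= n - k ->
  inK k.+1 n.+1 v.
Proof.
move=> inv stopped; have pk := inv_index inv; set p := index c v in pk stopped *.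
split.
  split=> [|x]; first by rewrite (inv_size inv); lia.
  rewrite -has_pred1 has_count !(inv_count inv); have [<-|cx] := eqVneq c x.
    by rewrite (count_memPn (fresh_notin w)).
  by rewrite addn0 -has_count has_pred1; apply: count_w.
apply/min_lenP => x; have [-> | xc] := eqVneq x c; last exact: (inv_far inv xc).
have p_le : p <= 2 * (n - k).
  have take_k : take k w = take p w ++ take (k - p) (drop p w) by rewrite -takeD subnKC.
  have := count_nonS_pre; rewrite /pre take_k count_cat.
  have := count_predC (inS n k w) (take p w); rewrite size_takel ?size_w; last by lia.
  by rewrite (size_SC_left inv) -/p in stopped; lia.
apply: (@far_apart_two _ _ _ p q); rewrite ?(inv_size inv) ?(inv_q inv) ?inv_nth_index //;
  first exact: inv_count_c.
all: lia.
Qed.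

Variable i : nat.

Lemma alpha_step_inv v : swap_inv v -> i < size (SC_left n k w v) ->
  swap_inv (alpha_step n k i w v) /\ index c (alpha_step n k i w v) < index c v.
Proof.
move=> inv active; have L_nil : SC_left n k w v != [::] by case: SC_left active.
have [p'p p'S near] := SC_left_last inv L_nil.
rewrite /alpha_step active.
by have [inv' ->] := swap_inv_step inv p'p p'S near.
Qed.

Lemma alpha_inK : i <= n - k -> inK k.+1 n.+1 (alpha n k i w).
Proof.
move=> i_le.
have stop v : ~~ (i < size (SC_left n k w v)) -> alpha_step n k i w v = v.
  by rewrite /alpha_step => /negbTE ->.
have [inv /negP stopped] := iter_invariant_stops alpha_step_inv stop swap_inv_v0 (index_size c v0).
by apply: inv_stopped_inK inv _; rewrite leqNgt in stopped *; lia.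
Qed.
End Diagram.

Theorem lemma4 (n k i : nat) (w : seq nat) :
  0 < n -> 0 < k -> k <= n -> 3 * (n - k) <= n -> i <= n - k ->
  inK k n w -> inK k.+1 n.+1 (alpha n k i w).
Proof. by move=> _ _ k_le_n three_le w_in i_le; apply: alpha_inK => //; lia. Qed.
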